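(* Let $r\ge1$ and $d\ge1$ be integers. There is a bijection between partitions of $\mathbb N$ into $r$ non-empty sets, each $d$-scattered, and partitions of $\mathbb N$ into $r+1$ non-empty sets, each $(d+1)$-scattered.
   Context: A subset $A\subseteq\mathbb N$ is $d$-scattered if for all $p<q$ in $A$ we have $q-p\ge d$. *)

From mathcomp Require Import all_boot.
Set Implicit Arguments. Unset Strict Implicit. Unset Printing Implicit Defensive.

Definition scattered (d : nat) (A : nat -> Prop) : Prop :=
  forall p q, A p -> A q -> p < q -> d <= q - p.

Definition partition_of_nat (r : nat) (P : (nat -> Prop) -> Prop) : Prop :=
  [/\ (exists f : 'I_r -> (nat -> Prop),
         injective f /\ forall B, P B <-> exists i, B = f i),
      (forall B, P B -> exists n, B n),
      (forall n, exists B, P B /\ B n) &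
      (forall B1 B2 n, P B1 -> P B2 -> B1 n -> B2 n -> B1 = B2)].

Definition scattered_partition (r d : nat) (P : (nat -> Prop) -> Prop) : Prop :=
  partition_of_nat r P /\ forall B, P B -> scattered d B.

Definition SPart (r d : nat) := {P : (nat -> Prop) -> Prop | scattered_partition r d P}.

From mathcomp Require Import all_boot zify boolp.
Set Implicit Arguments. Unset Strict Implicit. Unset Printing Implicit Defensive.

(** A partition of N into d-scattered blocks is the same thing as a map [p]
    sending each n to its predecessor in its block ([None] for the r block
    minima), with [m + d <= n] whenever [p n = Some m].  Such maps for
    [(r, d)] and [(r+1, d+1)] correspond by [p' (n+1) = p n], [p' 0 = None]:
    every gap grows by one, the old minima move up by one and 0 becomes a new
    minimum (this needs [d >= 1], so that [p' (n+1) <> Some n]). *)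

Definition descending (p : nat -> option nat) :=
  forall n m, p n = Some m -> m < n.

Definition some_injective (p : nat -> option nat) :=
  forall n1 n2 m, p n1 = Some m -> p n2 = Some m -> n1 = n2.

Definition prev_step (p : nat -> option nat) n := odflt n (p n).

(* For descending [p], n iterations are enough to reach the bottom of the chain. *)
Definition chain_min (p : nat -> option nat) n := iter n (prev_step p) n.

Definition same_chain (p : nat -> option nat) a b := chain_min p a = chain_min p b.

Lemma iter_prev_step_None p j n : p n = None -> iter j (prev_step p) n = n.
Proof. by move=> pn; elim: j => //= j ->; rewrite /prev_step pn. Qed.

Lemma chain_min_id p n : p n = None -> chain_min p n = n.
Proof. exact: iter_prev_step_None. Qed.

Definition is_prev (R : nat -> nat -> Prop) n (o : option nat) : Prop :=
  if o is Some m then [/\ m < n, R m n & forall j, m < j -> j < n -> ~ R j n]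
  else forall j, j < n -> ~ R j n.

Lemma is_prev_uniq R n o1 o2 : is_prev R n o1 -> is_prev R n o2 -> o1 = o2.
Proof.
case: o1 => [m1|]; case: o2 => [m2|] //=.
- move=> [lt1 R1 max1] [lt2 R2 max2]; case: (ltngtP m1 m2) => [lt12|lt21|->] //.
    by case: (max1 m2).
  by case: (max2 m1).
- by move=> [lt1 R1 _] none; case: (none m1).
- by move=> none [lt2 R2 _]; case: (none m2).
Qed.

Fixpoint last_below (f : pred nat) k :=
  if k is k'.+1 then (if f k' then Some k' else last_below f k') else None.

Definition prev_of (R : nat -> nat -> Prop) n := last_below (fun m => `[< R m n >]) n.

Lemma is_prev_last_below (f : pred nat) k : is_prev (fun a _ => f a) k (last_below f k).
Proof.
elim: k => [|k IH] //=; case fk: (f k) => /=.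
  by split=> // j lt_kj; rewrite ltnS leqNgt lt_kj.
case: (last_below f k) IH => [m|] /=.
  move=> [lt_mk fm max_m]; split=> [|//|j lt_mj]; first lia.
  by rewrite ltnS leq_eqVlt => /orP [/eqP ->|/(max_m _ lt_mj) //]; rewrite fk.
by move=> none j; rewrite ltnS leq_eqVlt => /orP [/eqP ->|/none //]; rewrite fk.
Qed.

Lemma is_prev_prev_of R n : is_prev R n (prev_of R n).
Proof.
have := is_prev_last_below (fun m => `[< R m n >]) n.
rewrite /prev_of; case: last_below => [m|] /=.
  by case=> lt_mn /asboolP Rmn max_m; split=> // j ? ? /asboolP; apply: max_m.
by move=> none j lt_jn /asboolP; apply: none.
Qed.

Lemma prev_of_None_iff R n : prev_of R n = None <-> forall j, j < n -> ~ R j n.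
Proof.
split=> [E | none]; first by move: (is_prev_prev_of R n); rewrite /is_prev E.
move: (is_prev_prev_of R n); rewrite /is_prev; case: prev_of => // m [lt_mn Rmn _].
by case: (none m).
Qed.

Section DescendingChains.

Variable p : nat -> option nat.
Hypothesis p_lt : descending p.

Lemma prev_step_le n : prev_step p n <= n.
Proof. by rewrite /prev_step; case E: (p n) => //=; apply/ltnW/p_lt. Qed.

Lemma iter_prev_step_le j n : iter j (prev_step p) n <= n.
Proof. by elim: j => //= j IH; apply: leq_trans (prev_step_le _) IH. Qed.

Lemma iter_prev_step_None_le k n : n <= k -> p (iter k (prev_step p) n) = None.
Proof.
elim: k n => [|k IH] n.
  by rewrite leqn0 => /eqP ->; case E: (p 0) => [m|] //; have := p_lt E.
rewrite iterSr /prev_step; case E: (p n) => [m|] /= le_nk.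
  by apply: IH; have := p_lt E; lia.
by rewrite iter_prev_step_None.
Qed.

Lemma chain_min_None n : p (chain_min p n) = None.
Proof. exact: iter_prev_step_None_le. Qed.

Lemma chain_min_le n : chain_min p n <= n.
Proof. exact: iter_prev_step_le. Qed.

Lemma iter_prev_step_chain_min k n : n <= k -> iter k (prev_step p) n = chain_min p n.
Proof.
elim: k => [|k IH]; first by rewrite leqn0 => /eqP ->.
rewrite leq_eqVlt => /orP [/eqP <- //| lt_nk].
by rewrite iterS IH // /prev_step chain_min_None.
Qed.

Lemma chain_min_prev_step n : chain_min p (prev_step p n) = chain_min p n.
Proof.
rewrite -(iter_prev_step_chain_min (prev_step_le n)) -iterSr.
exact: iter_prev_step_chain_min.
Qed.

Lemma iter_prev_step_Some j k m :
  iter j (prev_step p) k = m -> m <> k -> exists2 x, x <= k & p x = Some m.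
Proof.
elim: j m => [|j IH] m /=; first by move=> -> [].
rewrite {1}/prev_step; case E: (p _) => [m'|] /= <-; last exact: IH.
by move=> _; exists (iter j (prev_step p) k); rewrite ?iter_prev_step_le.
Qed.

Hypothesis p_inj : some_injective p.

(* Strong induction on n; if [p n = Some m] with [m < k < n], the chain from k
   would reach m through some [x <= k], and injectivity forces [x = n]. *)
Lemma same_chain_iter n k :
  same_chain p k n -> k <= n -> exists j, iter j (prev_step p) n = k.
Proof.
elim/ltn_ind: n k => n IH k same_kn.
rewrite leq_eqVlt => /orP [/eqP -> | lt_kn]; first by exists 0.
case E: (p n) => [m|]; last first.
  by move: (chain_min_le k); rewrite same_kn chain_min_id // leqNgt lt_kn.
have lt_mn := p_lt E.
have same_mn : same_chain p m n.
  by rewrite /same_chain -(chain_min_prev_step n) /prev_step E.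
have [le_km | lt_mk] := leqP k m.
  have [j <-] := IH m lt_mn k (etrans same_kn (esym same_mn)) le_km.
  by exists j.+1; rewrite iterSr /prev_step E.
have [j iter_km] := IH k lt_kn m (etrans same_mn (esym same_kn)) (ltnW lt_mk).
have neq_mk : m <> k by move=> e; rewrite e ltnn in lt_mk.
have [x le_xk pxm] := iter_prev_step_Some iter_km neq_mk.
by move: le_xk; rewrite (p_inj pxm E) leqNgt lt_kn.
Qed.

Lemma same_chain_gap d :
  (forall n m, p n = Some m -> m + d <= n) ->
  forall a b, same_chain p a b -> a < b -> a + d <= b.
Proof.
move=> p_gap a b same_ab lt_ab.
have [[|j] iter_ba] := same_chain_iter same_ab (ltnW lt_ab).
  by move: lt_ab; rewrite -iter_ba ltnn.
move: iter_ba lt_ab; rewrite iterSr {2}/prev_step; case E: (p b) => [m|] /= <-.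
  by move: (p_gap _ _ E) (iter_prev_step_le j m); lia.
by rewrite iter_prev_step_None // ltnn.
Qed.

Lemma is_prev_same_chain n : is_prev (same_chain p) n (p n).
Proof.
rewrite /is_prev; case E: (p n) => [m|] => [|k lt_kn same_kn].
  have lt_mn := p_lt E.
  split=> // [|k lt_mk lt_kn same_kn].
    by rewrite /same_chain -(chain_min_prev_step n) /prev_step E.
  have [[|j] iter_nk] := same_chain_iter same_kn (ltnW lt_kn).
    by move: lt_kn; rewrite -iter_nk ltnn.
  move: iter_nk (iter_prev_step_le j m); rewrite iterSr {2}/prev_step E => ->.
  by rewrite leqNgt lt_mk.
have [j] := same_chain_iter same_kn (ltnW lt_kn).
by rewrite iter_prev_step_None // => e; move: lt_kn; rewrite e ltnn.
Qed.

Lemma prev_of_same_chain : prev_of (same_chain p) = p.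
Proof.
apply: funext => n; apply: is_prev_uniq (is_prev_prev_of _ n) _.
exact: is_prev_same_chain.
Qed.

End DescendingChains.

Definition same_block (P : (nat -> Prop) -> Prop) a b := exists B, P B /\ B a /\ B b.

Definition classes (R : nat -> nat -> Prop) (B : nat -> Prop) := exists x, B = R ^~ x.

Section Equivalence.

Variable R : nat -> nat -> Prop.
Hypotheses (R_refl : forall a, R a a) (R_sym : forall a b, R a b -> R b a).
Hypothesis R_trans : forall a b c, R a b -> R b c -> R a c.

Lemma prev_of_descending : descending (prev_of R).
Proof. by move=> n m E; move: (is_prev_prev_of R n); rewrite /is_prev E => -[]. Qed.

Lemma prev_of_inj : some_injective (prev_of R).
Proof.
move=> n1 n2 m E1 E2.
move: (is_prev_prev_of R n1) (is_prev_prev_of R n2); rewrite /is_prev E1 E2.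
move=> [lt1 R1 max1] [lt2 R2 max2].
case: (ltngtP n1 n2) => // [lt12|lt21].
  by case: (max2 n1 lt1 lt12); apply: R_trans (R_sym R1) R2.
by case: (max1 n2 lt2 lt21); apply: R_trans (R_sym R2) R1.
Qed.

Lemma R_chain_min n : R n (chain_min (prev_of R) n).
Proof.
suff : forall j, R n (iter j (prev_step (prev_of R)) n) by apply.
elim=> [|j IH] //=; rewrite {1}/prev_step; case E: (prev_of R _) => [m|] //=.
move: (is_prev_prev_of R (iter j (prev_step (prev_of R)) n)).
by rewrite /is_prev E => -[_ Rm _]; apply: R_trans IH (R_sym Rm).
Qed.

Lemma same_chain_prev_ofE a b : same_chain (prev_of R) a b <-> R a b.
Proof.
split=> [same_ab | Rab].
  by apply: R_trans (R_chain_min a) _; rewrite same_ab; apply/R_sym/R_chain_min.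
have min_chain c j : j < chain_min (prev_of R) c -> ~ R j (chain_min (prev_of R) c).
  move: (is_prev_prev_of R (chain_min (prev_of R) c)).
  by rewrite /is_prev (chain_min_None prev_of_descending) => /(_ j).
have R_min := R_trans (R_trans (R_sym (R_chain_min a)) Rab) (R_chain_min b).
rewrite /same_chain.
case: (ltngtP (chain_min (prev_of R) a) (chain_min (prev_of R) b)) => // [lt_ab | lt_ba].
  by case: (min_chain b _ lt_ab R_min).
by case: (min_chain a _ lt_ba (R_sym R_min)).
Qed.

Lemma same_block_classes : same_block (classes R) = R.
Proof.
apply/predeq2P => a b; split=> [[B [[x ->] [Rax Rbx]]] | Rab].
  exact: R_trans Rax (R_sym Rbx).
by exists (R ^~ b); split; [exists b | split].
Qed.

End Equivalence.

Section Blocks.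

Variable P : (nat -> Prop) -> Prop.
Hypothesis P_cover : forall n, exists B, P B /\ B n.
Hypothesis P_disj : forall B1 B2 n, P B1 -> P B2 -> B1 n -> B2 n -> B1 = B2.

Lemma same_block_refl a : same_block P a a.
Proof. by have [B [PB Ba]] := P_cover a; exists B. Qed.

Lemma same_block_sym a b : same_block P a b -> same_block P b a.
Proof. by case=> B [PB [Ba Bb]]; exists B. Qed.

Lemma same_block_trans a b c : same_block P a b -> same_block P b c -> same_block P a c.
Proof.
move=> [B1 [PB1 [B1a B1b]]] [B2 [PB2 [B2b B2c]]]; exists B1; do !split=> //.
by rewrite (P_disj PB1 PB2 B1b B2b).
Qed.

Lemma block_same_block B x : P B -> B x -> B = same_block P ^~ x.
Proof.
move=> PB Bx; apply/predeqP => n; split=> [Bn | [B' [PB' [B'n B'x]]]].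
  by exists B.
by rewrite (P_disj PB PB' Bx B'x).
Qed.

Hypothesis P_nonempty : forall B, P B -> exists n, B n.

Lemma classes_same_block : classes (same_block P) = P.
Proof.
apply/predeqP => B; split=> [[x ->] | PB].
  by have [B' [PB' B'x]] := P_cover x; rewrite -(block_same_block PB' B'x).
by have [x Bx] := P_nonempty PB; exists x; apply: block_same_block.
Qed.

End Blocks.

Definition prev_map (r d : nat) (p : nat -> option nat) : Prop :=
  [/\ descending p, forall n m, p n = Some m -> m + d <= n, some_injective p &
      exists g : 'I_r -> nat, injective g /\ forall n, p n = None <-> exists i, n = g i].

Definition blocks p := classes (same_chain p).

Lemma scattered_partition_blocks r d p : prev_map r d p -> scattered_partition r d (blocks p).
Proof.
case=> p_lt p_gap p_inj [g [g_inj g_roots]].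
have g_min i : chain_min p (g i) = g i by apply/chain_min_id/g_roots; exists i.
split; last first.
  move=> _ [x ->] a b /= same_ax same_bx lt_ab.
  by have := same_chain_gap p_lt p_inj p_gap (etrans same_ax (esym same_bx)) lt_ab; lia.
split.
- exists (fun i => same_chain p ^~ (g i)); split.
    move=> i j /(congr1 (fun B => B (g i))) /=.
    by rewrite /same_chain !g_min => eq_ij; apply: g_inj; rewrite -eq_ij.
  move=> B; split=> [[x ->] | [i ->]]; last by exists (g i).
  have [i ei] := (g_roots (chain_min p x)).1 (chain_min_None p_lt x).
  by exists i; apply/funext => n; rewrite /same_chain g_min -ei.
- by move=> _ [x ->]; exists x.
- by move=> n; exists (same_chain p ^~ n); split; first exists n.
- move=> _ _ n [x1 ->] [x2 ->]; rewrite /same_chain => h1 h2.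
  by apply/funext => k; rewrite -h1 -h2.
Qed.

Lemma block_minima r P : partition_of_nat r P ->
  exists g : 'I_r -> nat,
    injective g /\ forall n, (forall j, j < n -> ~ same_block P j n) <-> exists i, n = g i.
Proof.
case=> [[f [f_inj f_P]] P_ne P_cover P_disj].
have f_in i : P (f i) by apply/f_P; exists i.
have ex_f i : exists n, `[< f i n >] by have [n fn] := P_ne _ (f_in i); exists n; apply/asboolP.
pose g i := ex_minn (ex_f i).
have g_min i : f i (g i) /\ forall k, f i k -> g i <= k.
  by rewrite /g; case: ex_minnP => m /asboolP fm min_m; split=> // k /asboolP; apply: min_m.
exists g; split.
  move=> i j e; apply/f_inj/(P_disj _ _ (g i) (f_in i) (f_in j) (g_min i).1).
  by rewrite e; exact: (g_min j).1.
move=> n; split=> [min_n | [i -> j lt_j [B [PB [Bj Bgi]]]]].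
  have [B [PB Bn]] := P_cover n; have [i eB] := (f_P B).1 PB; subst B.
  exists i; apply/eqP; rewrite eqn_leq (g_min i).2 // andbT leqNgt; apply/negP => lt_gn.
  by apply: (min_n _ lt_gn); exists (f i); do !split=> //; exact: (g_min i).1.
have eB : B = f i by apply: (P_disj _ _ _ PB (f_in i) Bgi (g_min i).1).
by move: lt_j; rewrite ltnNge (g_min i).2 // -eB.
Qed.

Lemma prev_map_of_partition r d P :
  scattered_partition r d P -> prev_map r d (prev_of (same_block P)).
Proof.
case=> P_part P_sc; have [_ _ P_cover P_disj] := P_part.
split.
- exact: prev_of_descending.
- move=> n m E; move: (is_prev_prev_of (same_block P) n); rewrite /is_prev E.
  by move=> [lt_mn [B [PB [Bm Bn]]] _]; have := P_sc B PB m n Bm Bn lt_mn; lia.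
- exact/prev_of_inj/same_block_trans/P_disj/same_block_sym.
- have [g [g_inj g_min]] := block_minima P_part; exists g; split=> // n.
  by split=> [/prev_of_None_iff/g_min | /g_min/prev_of_None_iff].
Qed.

Definition PrevMap r d := {p | prev_map r d p}.

Definition to_partition r d (x : PrevMap r d) : SPart r d :=
  exist _ (blocks (sval x)) (scattered_partition_blocks (proj2_sig x)).

Definition of_partition r d (P : SPart r d) : PrevMap r d :=
  exist _ (prev_of (same_block (sval P))) (prev_map_of_partition (proj2_sig P)).

Lemma to_partitionK r d : cancel (@to_partition r d) (@of_partition r d).
Proof.
case=> p p_map; apply: eq_exist; have [p_lt _ p_inj _] := p_map.
rewrite /= /blocks same_block_classes ?prev_of_same_chain //.
by move=> a b c; rewrite /same_chain => ->.
Qed.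

Lemma of_partitionK r d : cancel (@of_partition r d) (@to_partition r d).
Proof.
case=> P P_sp; apply: eq_exist; have [[_ P_ne P_cover P_disj] _] := P_sp.
rewrite /= /blocks.
have -> : same_chain (prev_of (same_block P)) = same_block P.
  apply/predeq2P => a b; apply: same_chain_prev_ofE.
  - exact: same_block_refl.
  - exact: same_block_sym.
  - exact: same_block_trans.
exact: classes_same_block.
Qed.

Definition shift_prev (p : nat -> option nat) n := if n is n'.+1 then p n' else None.

Lemma prev_map_shift r d p : prev_map r d p -> prev_map r.+1 d.+1 (shift_prev p).
Proof.
case=> p_lt p_gap p_inj [g [g_inj g_roots]]; split.
- by case=> // n m /p_lt; lia.
- by case=> // n m /p_gap; lia.
- by case=> [|n1] [|n2] m //= E1 E2; rewrite (p_inj _ _ _ E1 E2).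
exists (fun i : 'I_r.+1 => if unlift ord0 i is Some j then (g j).+1 else 0); split.
  move=> i j; case: unliftP => [i'|] ->; case: unliftP => [j'|] -> //.
  by case=> /g_inj ->.
case=> [|n] /=; first by split=> // _; exists ord0; rewrite unlift_none.
rewrite g_roots; split=> [[i ->] | [i]]; first by exists (lift ord0 i); rewrite liftK.
by case: unliftP => [j|] _ // [->]; exists j.
Qed.

Lemma prev_map_unshift r d q : 0 < d -> prev_map r.+1 d.+1 q -> prev_map r d (q \o succn).
Proof.
move=> d_gt0 [q_lt q_gap q_inj [g [g_inj g_roots]]]; split.
- by move=> n m /q_gap; lia.
- by move=> n m /q_gap; lia.
- by move=> n1 n2 m E1 E2; case: (q_inj _ _ _ E1 E2).
have q0 : q 0 = None by case E: (q 0) => [m|] //; have := q_lt _ _ E.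
have [i0 g_i0] := (g_roots 0).1 q0.
have g_lift_gt0 j : 0 < g (lift i0 j).
  rewrite lt0n; apply/eqP => g0; have := neq_lift i0 j.
  by rewrite (g_inj _ _ (etrans g0 g_i0)) eqxx.
exists (fun j => (g (lift i0 j)).-1); split.
  move=> j k /= e; apply: (@lift_inj _ i0); apply: g_inj.
  by move: e (g_lift_gt0 j) (g_lift_gt0 k); lia.
move=> n /=; rewrite g_roots; split=> [[i ei] | [j ->]].
  case: (unliftP i0 i) ei => [j|] -> ei; first by exists j; rewrite -ei.
  by rewrite -g_i0 in ei.
by exists (lift i0 j); have := g_lift_gt0 j; lia.
Qed.

Definition shift r d (x : PrevMap r d) : PrevMap r.+1 d.+1 :=
  exist _ (shift_prev (sval x)) (prev_map_shift (proj2_sig x)).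

Lemma shift_bij r d : 0 < d -> bijective (@shift r d).
Proof.
move=> d_gt0.
exists (fun y => exist _ (sval y \o succn) (prev_map_unshift d_gt0 (proj2_sig y))).
  by case=> p p_map; apply: eq_exist.
case=> q q_map; apply: eq_exist; have [q_lt _ _ _] := q_map.
apply/funext => -[|n] //=.
by case E: (q 0) => [m|] //; have := q_lt _ _ E.
Qed.

Theorem theorem4p1 (r d : nat) (hr : 1 <= r) (hd : 1 <= d) :
  exists f : SPart r d -> SPart r.+1 d.+1, bijective f.
Proof.
exists (@to_partition r.+1 d.+1 \o @shift r d \o @of_partition r d).
apply: bij_comp; first apply: bij_comp.
- exact: Bijective (@to_partitionK _ _) (@of_partitionK _ _).
- exact: shift_bij.
- exact: Bijective (@of_partitionK _ _) (@to_partitionK _ _).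
Qed.
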